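(* Let $S\subseteq 2^E$ be a powerful set with $|E|=n\ge 2$. Then $r_S(E)=n-1$ if and only if $S$ has a star element.
   Context: A set $S\subseteq 2^E$ ($E$ finite) is powerful if for every $X\subseteq E$ the number of members of $S$ contained in $X$ is a power of 2. Its rank function is $r_S(X)=\log_2\big(|S|/|\{Y\in S:Y\subseteq E\setminus X\}|\big)$. An element $e\in E$ is a star of $S$ if there exists $T\subseteq 2^{E\setminus\{e\}}$ such that $S=\{X: X\in T\}\cup\{X\cup\{e\}: X\subseteq E\setminus\{e\},\ X\notin T\}$. *)

From mathcomp Require Import all_boot.
Set Implicit Arguments. Unset Strict Implicit. Unset Printing Implicit Defensive.

Definition count_in (E : finType) (S : {set {set E}}) (X : {set E}) : nat :=
  #|[set Y in S | Y \subset X]|.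

Definition powerful (E : finType) (S : {set {set E}}) : Prop :=
  forall X : {set E}, exists k : nat, count_in S X = 2 ^ k.

(* r_S(X) = log_2 (|S| / |{Y in S : Y ⊆ E \ X}|).  For a powerful S the
   quotient is an exact power of 2, so nat division and logn 2 are exact. *)
Definition rankS (E : finType) (S : {set {set E}}) (X : {set E}) : nat :=
  logn 2 (#|S| %/ count_in S (~: X)).

Definition is_star (E : finType) (S : {set {set E}}) (e : E) : Prop :=
  exists T : {set {set E}},
    (forall X, X \in T -> e \notin X) /\
    S = T :|: [set X :|: [set e] | X in [set X : {set E} | (e \notin X) && (X \notin T)]].

From mathcomp Require Import all_boot zify.
Set Implicit Arguments. Unset Strict Implicit. Unset Printing Implicit Defensive.

(* Write f(X) for the number of members of S inside X.  Then e is a star on G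
   (exactly one of Y, e+Y is in S for every Y inside G-e) iff f(e+Z) = 2^|Z|
   for all Z inside G-e.  As the empty set is in S, r_S(E) = log2 f(E), and a
   star forces f(E) = 2^(n-1).  Conversely, f(G) = 2^(|G|-1) yields a star on G,
   by induction on |G|.  A submodularity-type bound gives x with
   f(G-x) >= 2^(|G|-2); either G-x is full and x is a star, or G-x has a star e
   by induction.  With G' = G-x-e and Z inside G', f(x+e+Z) is a power of two
   between 2^|Z| and 3*2^|Z|, so the number of members of S inside x+e+Z that
   contain x is 0 or 2^|Z|.  If x or x+e is in S this number is always 2^|Z|
   and e remains a star.  Otherwise a parity argument shows that x+Y and x+e+Y
   are simultaneously in S; the smallest Y with x+Y in S is then a singleton
   {c}, and c is a star on G. *)

Lemma exp2_sum_eq a b k : 2 ^ a + 2 ^ b = 2 ^ k -> a = b.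
Proof.
wlog le_ab : a b / a <= b.
  by move=> H; case: (leqP a b) => [/H//|/ltnW /H]; rewrite addnC => H' /H'.
move=> e; apply/eqP; rewrite eqn_leq le_ab /= leqNgt; apply/negP=> lt_ab.
have lt_exp : 2 ^ a < 2 ^ b by rewrite ltn_exp2l.
have : 2 ^ b < 2 ^ k < 2 ^ b.+1 by rewrite -e expnS; have := expn_gt0 2 a; lia.
by rewrite !ltn_exp2l //; lia.
Qed.

Lemma exp2_between a k : 2 ^ a <= 2 ^ k <= 3 * 2 ^ a -> k = a \/ k = a.+1.
Proof.
case/andP; rewrite leq_exp2l // => le_ak le_k3a.
have : 2 ^ k < 2 ^ a.+2 by rewrite !expnS; lia.
by rewrite ltn_exp2l //; lia.
Qed.

Lemma exp2_ltn_double a k : 2 ^ a < 2 ^ k -> 2 * 2 ^ a <= 2 ^ k.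
Proof. by rewrite ltn_exp2l // -expnS leq_exp2l. Qed.

Section SubsetSums.
Variable E : finType.
Implicit Types (u v : {set E} -> nat) (G Y Z : {set E}) (c x : E).

Definition subsum u Z := \sum_(Y in powerset Z) u Y.

Lemma subsumU1 u c Z : c \notin Z ->
  subsum u (c |: Z) = subsum (fun Y => u Y + u (c |: Y)) Z.
Proof.
move=> cZ; rewrite /subsum big_split /= (bigID (fun Y => c \in Y)) /= addnC.
congr (_ + _).
  apply: eq_bigl => Y; rewrite !powersetE -(setU1K cZ) subsetD1.
  by rewrite setU1K.
rewrite (reindex_onto (fun Y => c |: Y) (fun Y => Y :\ c)) /=; last first.
  by move=> Y /andP[_ cY]; rewrite setD1K.
apply: eq_bigl => Y; rewrite !powersetE setU11 andbT.
apply/andP/idP => [[sYZ /eqP <-]|sYZ].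
  by rewrite -(setU1K cZ) subsetD1 setD11 andbT (subset_trans (subD1set _ _)).
have cY : c \notin Y by apply: contra cZ; apply: (subsetP sYZ).
by rewrite setUS // setU1K.
Qed.

Lemma subsumU1_split u c Z : c \notin Z ->
  subsum u (c |: Z) = subsum u Z + subsum (fun Y => u (c |: Y)) Z.
Proof. by move=> cZ; rewrite subsumU1 // /subsum big_split. Qed.

Lemma leq_subsum u Y Z : Y \subset Z -> u Y <= subsum u Z.
Proof. by move=> sYZ; rewrite /subsum (bigD1 Y) ?powersetE //= leq_addr. Qed.

Lemma subsum_le1 u Z : (forall Y, u Y <= 1) -> subsum u Z <= 2 ^ #|Z|.
Proof.
by move=> u_le1; rewrite /subsum -card_powerset -sum1_card leq_sum.
Qed.

Lemma subsumD1 u Y :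
  subsum u Y = u Y + \sum_(Z in powerset Y | Z != Y) u Z.
Proof. by rewrite /subsum (bigD1 Y) ?powersetE. Qed.

Lemma subsum_exp2P u G :
  (forall Z, Z \subset G -> subsum u Z = 2 ^ #|Z|) <->
  (forall Y, Y \subset G -> u Y = 1).
Proof.
split=> [sumG|u1 Z sZG]; last first.
  rewrite /subsum -card_powerset -sum1_card; apply: eq_bigr => Y.
  by rewrite powersetE => /subset_trans/(_ sZG)/u1.
move=> Y; elim: {Y}_.+1 {-2}Y (ltnSn #|Y|) => // k IHk Y ltYk sYG.
have := sumG _ sYG; rewrite subsumD1.
have -> : \sum_(Z in powerset Y | Z != Y) u Z = \sum_(Z in powerset Y | Z != Y) 1.
  apply: eq_bigr => Z /andP[]; rewrite powersetE => sZY neZY.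
  have /proper_card ltZY : Z \proper Y by rewrite properEneq neZY.
  by rewrite IHk ?(leq_trans ltZY) ?(subset_trans sZY).
rewrite sum1_card.
have -> : #|[pred Z in powerset Y | Z != Y]| = (2 ^ #|Y|).-1.
  rewrite -card_powerset (cardD1 Y) powersetE subxx /=.
  by apply: eq_card => Z; rewrite !inE andbC.
have := expn_gt0 2 #|Y|; lia.
Qed.

Lemma subsum_full u G : (forall Y, u Y <= 1) -> subsum u G = 2 ^ #|G| ->
  forall Y, Y \subset G -> u Y = 1.
Proof.
move=> u_le1 sumG Y sYG.
have : subsum (fun Z => 1 - u Z) G + subsum u G = 2 ^ #|G|.
  rewrite /subsum -big_split /= -card_powerset -sum1_card.
  by apply: eq_bigr => Z _; rewrite subnK.
rewrite sumG => /eqP; rewrite -{2}[2 ^ _]add0n eqn_add2r => /eqP sum0.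
by have := leq_subsum (fun Z => 1 - u Z) sYG; have := u_le1 Y; rewrite sum0; lia.
Qed.

Lemma subsum_even u G : (forall Z, Z \subset G -> ~~ odd (subsum u Z)) ->
  forall Y, Y \subset G -> ~~ odd (u Y).
Proof.
move=> sum_even Y; elim: {Y}_.+1 {-2}Y (ltnSn #|Y|) => // k IHk Y ltYk sYG.
have := sum_even _ sYG; rewrite subsumD1 oddD.
suff /negbTE-> : ~~ odd (\sum_(Z in powerset Y | Z != Y) u Z) by rewrite addbF.
apply: (big_ind (fun m => ~~ odd m)) => // [m p|Z /andP[]].
  by rewrite oddD => /negbTE-> /negbTE->.
rewrite powersetE => sZY neZY.
have /proper_card ltZY : Z \proper Y by rewrite properEneq neZY.
by rewrite IHk ?(leq_trans ltZY) ?(subset_trans sZY).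
Qed.

Lemma subsum_min_support u Z : 0 < subsum u Z ->
  exists Y, [/\ Y \subset Z, 0 < u Y & subsum u Y = u Y].
Proof.
move=> sum_gt0; pose P Y := (Y \subset Z) && (0 < u Y).
have [Y0 PY0] : exists Y0, P Y0.
  apply/existsP; apply: contraLR sum_gt0 => /existsPn uZ0.
  rewrite -leqNgt leqn0 /subsum; apply/eqP/big1 => Y; rewrite powersetE => sYZ.
  by have := uZ0 Y; rewrite /P sYZ /= lt0n negbK => /eqP.
case: (arg_minnP (fun Y => #|Y|) PY0) => Y /andP[sYZ uY] Ymin.
exists Y; split=> //; rewrite subsumD1 big1 ?addn0 // => Y' /andP[].
rewrite powersetE => sY'Y neY'Y; apply/eqP; rewrite -leqn0 leqNgt.
apply/negP => uY'; have := Ymin Y'; rewrite /P (subset_trans sY'Y sYZ) uY'.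
have /proper_card : Y' \proper Y by rewrite properEneq neY'Y.
by move=> lt /(_ isT); rewrite leqNgt lt.
Qed.

Definition star_on u G c := forall Y, Y \subset G :\ c -> u Y + u (c |: Y) = 1.

Lemma star_onP u G c :
  star_on u G c <-> forall Z, Z \subset G :\ c -> subsum u (c |: Z) = 2 ^ #|Z|.
Proof.
have cZ Z : Z \subset G :\ c -> c \notin Z.
  by move=> /subsetP sZ; apply/negP => /sZ; rewrite !inE eqxx.
apply: iff_trans (iff_sym (subsum_exp2P (fun Y => u Y + u (c |: Y)) _)) _.
by split=> h Z sZ; [rewrite subsumU1 ?h ?cZ | rewrite -subsumU1 ?h ?cZ].
Qed.

Lemma star_onU1 u G x c : x \notin G -> c != x ->
  star_on u (x |: G) c <-> star_on u G c /\ star_on (fun Y => u (x |: Y)) G c.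
Proof.
move=> xG cx; split=> [star|[starG starx] Y sY].
  split=> Y sY; last rewrite setUCA; apply: star.
    by apply: subset_trans sY _; apply: setSD; apply: subsetU1.
  rewrite subsetD1 !inE (negbTE cx) /=; move: sY; rewrite subsetD1 => /andP[sYG ->].
  by rewrite andbT setUS.
have [xY | xY] := boolP (x \in Y).
  rewrite -(setD1K xY) setUCA; apply: starx.
  apply/subsetP=> z; rewrite !inE => /andP[zx zY].
  by move/subsetP/(_ z zY): sY; rewrite !inE (negbTE zx).
apply: starG; apply/subsetP=> z zY; move/subsetP/(_ z zY): sY; rewrite !inE.
by have -> : (z == x) = false by apply: contraNF xY => /eqP <-.
Qed.

Lemma eq_star_on u v G c : c \in G -> {in powerset G, u =1 v} ->
  star_on u G c -> star_on v G c.
Proof.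
move=> cG uv star Y sY; have sYG : Y \subset G by apply: subset_trans sY (subD1set _ _).
rewrite -!uv ?star // powersetE // subUset sub1set cG //.
Qed.

Lemma star_on_compl u v G c : c \in G -> (forall Y, Y \subset G -> u Y + v Y = 1) ->
  star_on u G c -> star_on v G c.
Proof.
move=> cG uv star Y sY; have sYG : Y \subset G by apply: subset_trans sY (subD1set _ _).
have := star Y sY; have := uv Y sYG; have := uv (c |: Y).
rewrite subUset sub1set cG sYG => /(_ isT); lia.
Qed.

Lemma star_on_subsum u G c : c \in G -> star_on u G c -> subsum u G = 2 ^ #|G|.-1.
Proof.
move=> cG /star_onP/(_ _ (subxx _)); rewrite setD1K // => ->.
by rewrite (cardsD1 c G) cG.
Qed.

End SubsetSums.

Definition indicator (E : finType) (S : {set {set E}}) (Y : {set E}) : nat := Y \in S.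

Lemma count_inE (E : finType) (S : {set {set E}}) X :
  count_in S X = subsum (indicator S) X.
Proof.
rewrite /count_in /subsum -sum1_card big_mkcond /= [RHS]big_mkcond /=.
apply: eq_bigr => Y _; rewrite inE powersetE /indicator.
by case: (Y \subset X); rewrite ?andbT ?andbF //; case: ifP.
Qed.

Lemma is_starP (E : finType) (S : {set {set E}}) e :
  is_star S e <-> star_on (indicator S) setT e.
Proof.
have inIm (T : {set {set E}}) (X : {set E}) :
    (X \in [set Y :|: [set e] | Y in [set Y : {set E} | (e \notin Y) && (Y \notin T)]])
    = (e \in X) && (X :\ e \notin T).
  apply/imsetP/andP => [[Y] | [eX XeT]].
    rewrite inE => /andP[eY YT] ->; rewrite setUC.
    by split; [exact: setU11 | rewrite setU1K].
  by exists (X :\ e); rewrite ?inE ?eX ?XeT ?eqxx // setUC setD1K.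
split=> [[T [Te ->]] Y | star].
  rewrite subsetD1 subsetT /= => eY.
  rewrite /indicator !in_setU !inIm setU11 setU1K // (negbTE eY) orbF.
  have /negbTE-> : e |: Y \notin T by apply: contraTN (setU11 e Y) => /Te.
  by case: (Y \in T).
exists [set Y in S | e \notin Y]; split=> [X|]; first by rewrite inE => /andP[].
apply/setP => X; rewrite !inE inIm; case: (boolP (e \in X)) => eX /=; last first.
  by rewrite andbT orbF.
have := star (X :\ e); rewrite subsetD1 subsetT !inE eqxx setD1K // => /(_ isT).
by rewrite /indicator; case: (X \in S); case: (X :\ e \in S).
Qed.

Section PowerfulFamily.
Variables (E : finType) (S : {set {set E}}).
Hypothesis powS : powerful S.
Local Notation s := (indicator S).
Local Notation cnt := (subsum s).
Implicit Types (G Y Z : {set E}) (c e x y : E).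

Lemma cnt_exp2 Z : exists k, cnt Z = 2 ^ k.
Proof. by rewrite -count_inE; apply: powS. Qed.

Lemma cnt_gt0 Z : 0 < cnt Z.
Proof. by have [k ->] := cnt_exp2 Z; rewrite expn_gt0. Qed.

Lemma cnt_set0 : cnt set0 = 1.
Proof.
have [[|k] cnt0] := cnt_exp2 set0 => //.
move: cnt0; rewrite /subsum powerset0 big_set1 expnS /indicator.
by have := leq_b1 (set0 \in S); lia.
Qed.

Lemma rankST : rankS S setT = logn 2 (cnt setT).
Proof.
rewrite /rankS setCT count_inE cnt_set0 divn1 -count_inE /count_in.
by congr logn; apply: eq_card => Y; rewrite !inE subsetT andbT.
Qed.

Lemma cntU1_le x Z : x \notin Z -> cnt (x |: Z) <= cnt Z + 2 ^ #|Z|.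
Proof.
by move=> xZ; rewrite subsumU1_split // leq_add2l; apply: subsum_le1 => Y; apply: leq_b1.
Qed.

Lemma cnt_submod x y Z : x != y -> x \notin Z -> y \notin Z ->
  cnt (x |: (y |: Z)) + cnt Z <= cnt (x |: Z) + cnt (y |: Z) + 2 ^ #|Z|.
Proof.
move=> xy xZ yZ; have xyZ : x \notin y |: Z by rewrite !inE negb_or xy.
rewrite (subsumU1_split _ xyZ) (subsumU1_split _ xZ) !(subsumU1_split _ yZ).
have : subsum (fun Y => s (x |: (y |: Y))) Z <= 2 ^ #|Z|.
  by apply: subsum_le1 => Y; apply: leq_b1.
lia.
Qed.

Lemma exists_large_deletion n G : #|G| = n.+2 -> cnt G = 2 ^ n.+1 ->
  exists2 x, x \in G & 2 ^ n <= cnt (G :\ x).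
Proof.
move=> cardG cntG.
have [/exists_inP[x xG large]|/exists_inPn small] :=
  boolP [exists x in G, 2 ^ n <= cnt (G :\ x)]; first by exists x.
have [x xG] : exists x, x \in G by apply/card_gt0P; rewrite cardG.
have [y yGx] : exists y, y \in G :\ x.
  by apply/card_gt0P; move: cardG; rewrite (cardsD1 x G) xG; lia.
have /setD1P[yx yG] := yGx.
pose Z := G :\ x :\ y.
have GxE : G :\ x = y |: Z by rewrite setD1K.
have GyE : G :\ y = x |: Z.
  apply/setP=> z; rewrite !inE; case: (eqVneq z x) => [->|] //=.
  by rewrite eq_sym yx xG.
have GE : G = x |: (y |: Z) by rewrite -GxE setD1K.
have cardZ : #|Z| = n.
  by move: cardG; rewrite /Z (cardsD1 x G) xG (cardsD1 y (G :\ x)) yGx; lia.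
have half u : u \in G -> 2 * cnt (G :\ u) <= 2 ^ n.
  move=> uG; have [k cntk] := cnt_exp2 (G :\ u).
  by rewrite cntk; apply: exp2_ltn_double; rewrite -cntk ltnNge small.
have xy : x != y by rewrite eq_sym.
have xZ : x \notin Z by rewrite !inE eqxx andbF.
have yZ : y \notin Z by rewrite !inE eqxx.
have := cnt_submod xy xZ yZ; rewrite -GE -GxE -GyE cntG cardZ.
have := half x xG; have := half y yG; have := cnt_gt0 Z; rewrite expnS; lia.
Qed.

Lemma full_deletion_star G x : x \in G ->
  cnt (G :\ x) = 2 ^ #|G :\ x| -> cnt (G :\ x) = cnt G -> star_on s G x.
Proof.
move=> xG full same Y sY.
have -> : s Y = 1 by apply: (subsum_full (fun Z => leq_b1 (Z \in S)) full sY).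
move: same; rewrite -{2}(setD1K xG) subsumU1_split ?setD11 // -{1}[cnt _]addn0.
move=> /eqP; rewrite eqn_add2l eq_sym => /eqP sum0.
by have := leq_subsum (fun Y => s (x |: Y)) sY; rewrite sum0 leqn0 => /eqP->.
Qed.

Section Extension.
Variables (x e : E) (G' : {set E}).
Hypotheses (eG : e \notin G') (xeG : x \notin e |: G').
Hypothesis e_star : star_on s (e |: G') e.
Hypothesis cnt_half : cnt (x |: (e |: G')) = 2 ^ #|G'|.+1.
Local Notation sx := (fun Y => s (x |: Y)).

Let xG : x \notin G'.
Proof. by apply: contra xeG; rewrite inE => ->; rewrite orbT. Qed.

Let ex : e != x.
Proof. by apply: contra xeG => /eqP->; rewrite setU11. Qed.

Lemma cnt_eU1 Z : Z \subset G' -> cnt (e |: Z) = 2 ^ #|Z|.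
Proof.
by move=> sZG; have := (star_onP s (e |: G') e).1 e_star Z; rewrite setU1K //; apply.
Qed.

Lemma subsum_sx_dichotomy Z : Z \subset G' ->
  subsum sx (e |: Z) = 0 \/ subsum sx (e |: Z) = 2 ^ #|Z|.
Proof.
move=> sZG; have xeZ : x \notin e |: Z.
  by apply: contra xeG; apply/subsetP; rewrite setUS.
have eZ : e \notin Z by apply: contra eG; apply/subsetP.
have split := subsumU1_split s xeZ; rewrite cnt_eU1 // in split.
have [k cntk] := cnt_exp2 (x |: (e |: Z)).
have /exp2_between[] : 2 ^ #|Z| <= 2 ^ k <= 3 * 2 ^ #|Z|.
  rewrite -cntk split leq_addr /=.
  by have := cntU1_le xeZ; rewrite cnt_eU1 // cardsU1 eZ expnS; lia.
- by move=> kZ; left; move: split; rewrite cntk kZ; lia.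
- by move=> kZ; right; move: split; rewrite cntk kZ expnS; lia.
Qed.

Lemma star_extend_same : 0 < sx set0 + sx [set e] -> star_on s (x |: (e |: G')) e.
Proof.
move=> pos; apply/(star_onU1 _ xeG ex); split=> //.
apply/star_onP => Z; rewrite setU1K // => sZG.
have := leq_subsum sx (sub0set (e |: Z)); have := leq_subsum sx (subsetUl [set e] Z).
by case: (subsum_sx_dichotomy sZG); lia.
Qed.

Section Invariant.
Hypothesis sx_small : sx set0 + sx [set e] = 0.

Lemma sx_invariant Y : Y \subset G' -> sx (e |: Y) = sx Y.
Proof.
have even Z : Z \subset G' -> ~~ odd (subsum (fun Y => sx Y + sx (e |: Y)) Z).
  move=> sZG; have [->|nZ] := eqVneq Z set0.
    by move: sx_small; rewrite /subsum powerset0 big_set1 !setU0 => ->.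
  have eZ : e \notin Z by apply: contra eG; apply/subsetP.
  rewrite -subsumU1 //; case: (subsum_sx_dichotomy sZG) => -> //.
  by rewrite oddX orbF cards_eq0.
by move=> /(subsum_even even); rewrite /indicator; do 2 case: (_ \in S).
Qed.

Lemma subsum_sx_double Z : Z \subset G' -> subsum sx (e |: Z) = 2 * subsum sx Z.
Proof.
move=> sZG; have eZ : e \notin Z by apply: contra eG; apply/subsetP.
rewrite subsumU1 // /subsum big_distrr /=; apply: eq_bigr => Y.
by rewrite powersetE => sYZ; rewrite sx_invariant ?(subset_trans sYZ sZG) // addnn -mul2n.
Qed.

Lemma subsum_sx_half Z : Z \subset G' ->
  subsum sx Z = 0 \/ 2 * subsum sx Z = 2 ^ #|Z|.
Proof.
by move=> sZG; case: (subsum_sx_dichotomy sZG); rewrite subsum_sx_double //; lia.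
Qed.

Lemma exists_sx_atom : exists2 c, c \in G' & sx [set c] = 1.
Proof.
have pos : 0 < subsum sx G'.
  have := subsumU1_split s xeG.
  by rewrite cnt_half cnt_eU1 // subsum_sx_double // expnS; lia.
have [Y [sYG sxY sumY]] := subsum_min_support pos.
have sxY1 : sx Y = 1 by move: sxY (leq_b1 ((x |: Y) \in S)); rewrite /indicator; lia.
have /cards1P[c Yc] : #|Y| == 1.
  have [|] := subsum_sx_half sYG; rewrite sumY sxY1 // => /eqP.
  by rewrite muln1 -[X in X == _]expn1 eqn_exp2l // eq_sym.
by exists c; [rewrite -sub1set -Yc | rewrite -Yc].
Qed.

Lemma star_extend_atom c : c \in G' -> sx [set c] = 1 -> star_on s (x |: (e |: G')) c.
Proof.
move=> cG ac.
have cx : c != x by apply: contraNneq xG => <-.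
have ce : c != e by apply: contraNneq eG => <-.
have sc Z : Z \subset G' :\ c -> [/\ c \notin Z, c |: Z \subset G' & #|c |: Z| = #|Z|.+1].
  rewrite subsetD1 => /andP[sZG cZ].
  by rewrite cardsU1 cZ subUset sub1set cG sZG.
have subsum_sx_c Z : Z \subset G' :\ c -> subsum sx (c |: Z) = 2 ^ #|Z|.
  move=> /sc[cZ sZG cardZ]; have := leq_subsum sx (subsetUl [set c] Z).
  by rewrite ac; case: (subsum_sx_half sZG); rewrite ?cardZ ?expnS; lia.
have star_sx : star_on sx G' c by apply/star_onP.
have star_s : star_on s G' c.
  apply/star_onP => Z sZ; have [_ sZG _] := sc Z sZ.
  have xcZ : x \notin c |: Z by apply: contra xG; apply/subsetP.
  have := subsumU1_split s xcZ; rewrite subsum_sx_c //.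
  have [k ->] := cnt_exp2 (x |: (c |: Z)); have [l ->] := cnt_exp2 (c |: Z).
  by move/esym/exp2_sum_eq->.
have star_se : star_on (fun Y => s (e |: Y)) G' c.
  by apply: star_on_compl cG _ star_s => Y sYG; apply: e_star; rewrite setU1K.
have star_sxe : star_on (fun Y => sx (e |: Y)) G' c.
  apply: eq_star_on cG _ star_sx => Y.
  by rewrite powersetE => sYG; rewrite sx_invariant.
by apply/(star_onU1 _ xeG cx); split; apply/(star_onU1 _ eG ce); split.
Qed.

End Invariant.

Lemma star_extend : exists2 c, c \in x |: (e |: G') & star_on s (x |: (e |: G')) c.
Proof.
have [sx_small|pos] := posnP (sx set0 + sx [set e]).
  have [c cG ac] := exists_sx_atom sx_small.
  by exists c; [rewrite !inE cG !orbT | exact: star_extend_atom].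
by exists e; [rewrite !inE eqxx orbT | exact: star_extend_same].
Qed.

End Extension.

Lemma half_star n G : #|G| = n.+1 -> cnt G = 2 ^ n ->
  exists2 e, e \in G & star_on s G e.
Proof.
elim: n G => [|n IHn] G cardG cntG.
  have /cards1P[g Gg] : #|G| == 1 by rewrite cardG.
  rewrite Gg in cntG *; exists g; first exact: set11.
  apply/star_onP => Z; rewrite setDv subset0 => /eqP->.
  by rewrite setU0 cntG cards0.
have [x xG large] := exists_large_deletion cardG cntG.
have cardGx : #|G :\ x| = n.+1 by move: cardG; rewrite (cardsD1 x G) xG; lia.
have GE : G = x |: (G :\ x) by rewrite setD1K.
have cnt_split := subsumU1_split s (negbT (setD11 x G)); rewrite -GE in cnt_split.
have [k cntk] := cnt_exp2 (G :\ x).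
have /exp2_between[kn|kn] : 2 ^ n <= 2 ^ k <= 3 * 2 ^ n.
  by rewrite -cntk large /=; move: cnt_split; rewrite cntG expnS; lia.
  have [e eGx e_star] := IHn _ cardGx (etrans cntk (congr1 _ kn)).
  have GxE : G :\ x = e |: (G :\ x :\ e) by rewrite setD1K.
  rewrite GxE in e_star; rewrite GE GxE in cntG *.
  apply: star_extend => //; first by rewrite setD11.
    by rewrite -GxE setD11.
  by rewrite cntG; congr (2 ^ _); move: cardGx; rewrite (cardsD1 e) eGx; lia.
exists x => //; apply: full_deletion_star => //; last by rewrite cntG cntk kn.
by rewrite cntk cardGx kn.
Qed.

End PowerfulFamily.

Theorem proposition6 (E : finType) (S : {set {set E}}) (n : nat) :
  #|E| = n -> 2 <= n -> powerful S ->
  (rankS S setT = n - 1 <-> exists e : E, is_star S e).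
Proof.
move=> cardE n_ge2 powS; rewrite rankST //.
have cardT : #|[set: E]| = (n - 1).+1 by rewrite cardsT cardE; lia.
split=> [rank | [e /is_starP star]].
  have [k cntT] := cnt_exp2 powS setT.
  move: rank; rewrite cntT pfactorK // => kE; rewrite kE in cntT.
  by have [e _ /is_starP] := half_star powS cardT cntT; exists e.
by rewrite (star_on_subsum (in_setT e) star) cardT pfactorK.
Qed.
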